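(* Let $n\geq 1$ and $k\geq 0$ be integers, let $0\leq i\leq n-1$ and $0\leq j\leq k$, and define \[ i'=\Big\lfloor \frac{(n+1)k-(k+1)i-j}{k+1}\Big\rfloor,\qquad j'=(n+1)k-(k+1)i-j-(k+1)i'. \] Then the map $\varphi$ (defined in the context) restricts to a bijection from $\Gamma^k(n,i;j)$ onto $\Gamma^k(n,i';j')$.
   Context: For a permutation $\pi=\pi_1\cdots\pi_n$ of $[n]=\{1,\dots,n\}$, $\mathrm{des}(\pi)$ is the number of $m\in[n-1]$ with $\pi_m>\pi_{m+1}$, and $\mathrm{maxdrop}(\pi)=\max\{m-\pi_m:1\leq m\leq n\}$. $A_{n,k}$ is the set of permutations of $[n]$ with $\mathrm{maxdrop}(\pi)\leq k$. For $0\le i\le n-1$ and $0\le j\le k$, $\Gamma^k(n,i;j)$ is the set of $\pi\in A_{n,k}$ with $\mathrm{des}(\pi)=i$ and $\pi_n=n-k+j$. For a permutation $\sigma$ of $[n-1]$ and $1\leq r\leq n$, $\sigma\leftarrow r$ is the permutation of $[n]$ obtained by increasing every entry of $\sigma$ that is $\geq r$ by $1$ and then appending $r$ at the end (e.g. $3421\leftarrow 3=45213$). The map $\varphi:A_{n,k}\to A_{n,k}$ (for fixed $k$, all $n\ge1$) is defined recursively: $\varphi(1)=1$; for $n\geq 2$ and $\pi\in A_{n,k}$, let $i=\mathrm{des}(\pi)$, $j=\pi_n-n+k$, let $i',j'$ be given by $i'=\lfloor((n+1)k-(k+1)i-j)/(k+1)\rfloor$ and $j'=(n+1)k-(k+1)i-j-(k+1)i'$,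 let $\pi'$ be the permutation of $[n-1]$ order-isomorphic to $\pi_1\cdots\pi_{n-1}$ (so $\pi=\pi'\leftarrow\pi_n$), and set $\varphi(\pi)=\varphi(\pi')\leftarrow(n-k+j')$. *)

From mathcomp Require Import all_boot all_order all_algebra.
Set Implicit Arguments. Unset Strict Implicit. Unset Printing Implicit Defensive.
Import Order.TTheory GRing.Theory Num.Theory.
Local Open Scope ring_scope.

(* Permutations of [n] = {1,...,n} are represented in one-line notation
   as sequences s = pi_1 ... pi_n of naturals (s`_0 = pi_1). *)

Definition is_permn (n : nat) (s : seq nat) : bool := perm_eq s (iota 1 n).

Definition des (s : seq nat) : nat :=
  (\sum_(m < (size s).-1) (nth 0 s m.+1 < nth 0 s m)%N)%N.

(* maxdrop(pi) = max_m (m - pi_m); computed with truncated subtraction,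
   which gives the same value since the true max is >= 0
   (at the position m of the entry 1, m - 1 >= 0). *)
Definition maxdrop (s : seq nat) : nat :=
  (\max_(m < size s) (m.+1 - nth 0 s m))%N.

Definition inA (n k : nat) (s : seq nat) : bool :=
  is_permn n s && (maxdrop s <= k)%N.

Definition Gamma (k n : nat) (i j : int) (s : seq nat) : bool :=
  [&& inA n k s, (des s)%:Z == i & ((last 0 s)%:Z == n%:Z - k%:Z + j)%R].

Definition iprime (n k : nat) (i j : int) : int :=
  (((n.+1 * k)%N%:Z - (k.+1)%:Z * i - j) %/ (k.+1)%:Z)%Z.
Definition jprime (n k : nat) (i j : int) : int :=
  ((n.+1 * k)%N%:Z - (k.+1)%:Z * i - j - (k.+1)%:Z * iprime n k i j)%R.

Definition insert_last (sigma : seq nat) (r : nat) : seq nat :=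
  rcons [seq (if (r <= x)%N then x.+1 else x) | x <- sigma] r.

(* the permutation of [n-1] order-isomorphic to pi_1 ... pi_(n-1) *)
Definition std_init (s : seq nat) : seq nat :=
  let r := last 0 s in
  [seq (if (r < x)%N then x.-1 else x) | x <- take (size s).-1 s].

Fixpoint phi_rec (k n : nat) (s : seq nat) : seq nat :=
  match n with
  | 0 => s
  | n'.+1 =>
      if (n' == 0)%N then s
      else
        let i := (des s)%:Z in
        let j := ((last 0 s)%:Z - n%:Z + k%:Z)%R in
        let j' := jprime n k i j in
        insert_last (phi_rec k n' (std_init s)) `|(n%:Z - k%:Z + j')%R|%N
  end.

Definition phi (k : nat) (s : seq nat) : seq nat := phi_rec k (size s) s.

From mathcomp Require Import all_boot all_order all_algebra zify.
Import Order.TTheory GRing.Theory Num.Theory.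
Set Implicit Arguments. Unset Strict Implicit. Unset Printing Implicit Defensive.

(* phi is an involution of A_{n,k}.  By induction on n: writing pi = p <- r
   with r = n - k + j, appending r adds the descent [j < j0] to des p, where
   j0 is the statistic of p, and phi pi = phi p <- (n - k + j').  Comparing
   the two quotients (iprimeS) shows des (phi pi) = i' and phi (phi pi) = pi.
   As (i, j) |-> (i', j') is itself an involution for 0 <= j <= k, phi maps
   Gamma^k(n,i;j) bijectively onto Gamma^k(n,i';j'). *)

Lemma permnP n s :
  reflect [/\ uniq s, size s = n & {in s, forall x, 0 < x <= n}] (is_permn n s).
Proof.
apply: (iffP idP) => [s_perm | [s_uniq s_size s_range]].
  split; first by rewrite (perm_uniq s_perm) iota_uniq.
    by rewrite (perm_size s_perm) size_iota.
  by move=> x; rewrite (perm_mem s_perm) mem_iota; lia.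
apply: uniq_perm => //; first exact: iota_uniq.
have sub_s : {subset s <= iota 1 n}.
  by move=> x /s_range; rewrite mem_iota; lia.
by have [|] := uniq_min_size s_uniq sub_s; rewrite ?size_iota ?s_size.
Qed.

Lemma maxdrop_leP k s :
  reflect (forall m, m < size s -> m.+1 <= nth 0 s m + k) (maxdrop s <= k).
Proof.
apply: (iffP (bigmax_leqP xpredT _ _)) => drop_le m.
  by move=> lt_ms; have := drop_le (Ordinal lt_ms) isT; rewrite /=; lia.
by move=> _; have := drop_le m (ltn_ord m); lia.
Qed.

Lemma ltn_bump2 h i j : (bump h i < bump h j) = (i < j).
Proof. by rewrite !ltnNge leq_bump2. Qed.

Lemma des_rcons t x : des (rcons t x) = des t + ((0 < size t) && (x < last 0 t)).
Proof.
rewrite /des size_rcons /=.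
case: t => [|a t]; first by rewrite !big_ord0.
rewrite [size (a :: t)]/= big_ord_recr /=; congr (_ + _).
  apply: eq_bigr => i _; rewrite !nth_rcons /= (ltn_ord i); congr (_ < _).
  case: i => [[|m] Hm] //=; rewrite nth_rcons.
  by have -> : m < size t by lia.
rewrite nth_rcons ltnn eqxx -[a :: rcons t x]/(rcons (a::t) x) nth_rcons /= ltnS leqnn.
by rewrite -[X in nth _ _ X]/((size (a::t)).-1) nth_last.
Qed.

Lemma des_map_mono f t : {mono f : a b / a < b} -> des (map f t) = des t.
Proof.
move=> f_mono; rewrite /des size_map; apply: eq_bigr => i _.
by rewrite !(nth_map 0) ?f_mono //; have := ltn_ord i; lia.
Qed.

Lemma insert_lastE p r : insert_last p r = rcons (map (bump r) p) r.
Proof. by congr rcons; apply: eq_map => x; rewrite /bump; case: leqP. Qed.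

Lemma std_init_rcons t r : std_init (rcons t r) = map (unbump r) t.
Proof.
rewrite /std_init last_rcons size_rcons /= -cats1 take_size_cat //.
by apply: eq_map => x; rewrite /unbump; case: ltnP => //; lia.
Qed.

Lemma size_insert_last p r : size (insert_last p r) = (size p).+1.
Proof. by rewrite size_rcons size_map. Qed.

Lemma last_insert_last p r : last 0 (insert_last p r) = r.
Proof. exact: last_rcons. Qed.

Lemma std_init_insert_last p r : std_init (insert_last p r) = p.
Proof. by rewrite insert_lastE std_init_rcons -map_comp (eq_map (bumpK r)) map_id. Qed.

Lemma des_insert_last p r :
  des (insert_last p r) = des p + ((0 < size p) && (r <= last 0 p)).
Proof.
rewrite insert_lastE des_rcons des_map_mono; last exact: ltn_bump2.
rewrite size_map; case/lastP: p => [|q y] //.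
rewrite map_rcons !last_rcons /bump; congr (_ + (_ && _)); case: leqP => /= h; lia.
Qed.

Lemma insert_last_std_init s :
  uniq s -> s != [::] -> insert_last (std_init s) (last 0 s) = s.
Proof.
case/lastP: s => // t r; rewrite rcons_uniq last_rcons std_init_rcons insert_lastE.
case/andP=> r_notin_t _ _; congr rcons; rewrite -map_comp -[RHS]map_id.
by apply/eq_in_map => x x_in_t; apply: unbumpK; apply: contraNneq r_notin_t => <-.
Qed.

Lemma inA_size n k s : inA n k s -> size s = n.
Proof. by case/andP=> /permnP[]. Qed.

Lemma inA_last n k s : inA n.+1 k s -> 0 < last 0 s <= n.+1 /\ n.+1 <= last 0 s + k.
Proof.
case/lastP: s => [|t r]; first by move/inA_size.
case/andP=> /permnP[_ s_size s_range] /maxdrop_leP s_drop; rewrite last_rcons.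
move: s_size; rewrite size_rcons => -[t_size]; split.
  by apply: s_range; rewrite mem_rcons mem_head.
by have := s_drop n; rewrite size_rcons nth_rcons t_size ltnn eqxx; apply.
Qed.

Lemma inA_std_init n k s : inA n.+1 k s -> inA n k (std_init s).
Proof.
case/lastP: s => [|t r]; first by move/inA_size.
move=> s_inA; have := inA_last s_inA; rewrite last_rcons => -[r_range r_drop].
case/andP: s_inA => /permnP[s_uniq s_size s_range] /maxdrop_leP s_drop.
move: s_size s_uniq; rewrite size_rcons rcons_uniq std_init_rcons.
case=> t_size /andP[r_notin_t t_uniq].
have t_range x : x \in t -> 0 < x <= n.+1 /\ x != r.
  move=> x_in_t; split; first by apply: s_range; rewrite mem_rcons inE x_in_t orbT.
  by apply: contraNneq r_notin_t => <-.
apply/andP; split.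
  apply/permnP; split.
  - rewrite map_inj_in_uniq // => a b /t_range[_ a_r] /t_range[_ b_r].
    by rewrite /unbump; case: (ltnP r a); case: (ltnP r b); lia.
  - by rewrite size_map.
  - move=> _ /mapP[x /t_range[x_range x_r] ->].
    by rewrite /unbump; case: (ltnP r x); lia.
apply/maxdrop_leP => m; rewrite size_map t_size => lt_mn.
have [x_range x_r] : 0 < nth 0 t m <= n.+1 /\ nth 0 t m != r.
  by apply: t_range; rewrite mem_nth ?t_size.
have := s_drop m; rewrite size_rcons nth_rcons t_size lt_mn (nth_map 0) ?t_size //.
by rewrite /unbump; case: (ltnP r (nth 0 t m)); lia.
Qed.

Lemma inA_insert_last n k p r :
  inA n k p -> 0 < r <= n.+1 -> n.+1 <= r + k -> inA n.+1 k (insert_last p r).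
Proof.
case/andP=> /permnP[p_uniq p_size p_range] /maxdrop_leP p_drop r_range r_drop.
rewrite insert_lastE; apply/andP; split.
  apply/permnP; split.
  - rewrite rcons_uniq (map_inj_uniq (can_inj (bumpK r))) p_uniq andbT.
    by apply/mapP => -[x _ /eqP]; rewrite (negbTE (neq_bump _ _)).
  - by rewrite size_rcons size_map p_size.
  - move=> x; rewrite mem_rcons inE => /predU1P[-> //|/mapP[y /p_range]].
    by rewrite /bump => y_range ->; case: leqP; lia.
apply/maxdrop_leP => m; rewrite size_rcons size_map p_size ltnS nth_rcons size_map.
rewrite leq_eqVlt => /predU1P[-> | lt_mn]; first by rewrite p_size ltnn eqxx.
have := p_drop m; rewrite p_size lt_mn (nth_map 0) ?p_size //.
by rewrite /bump; case: leqP; lia.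
Qed.

Local Open Scope ring_scope.

Definition stat_num (n k : nat) (i j : int) : int := (n.+1 * k)%N%:Z - k.+1%:Z * i - j.

Lemma iprimeE n k i j : iprime n k i j = (stat_num n k i j %/ k.+1%:Z)%Z.
Proof. by []. Qed.

Lemma jprimeE n k i j : jprime n k i j = (stat_num n k i j %% k.+1%:Z)%Z.
Proof. by rewrite /jprime /modz [in RHS]mulrC. Qed.

Lemma stat_num_euclid n k i j :
  stat_num n k i j = k.+1%:Z * iprime n k i j + jprime n k i j.
Proof. by rewrite /jprime [RHS]addrC subrK. Qed.

Lemma jprime_range n k i j : 0 <= jprime n k i j <= k%:Z.
Proof.
rewrite jprimeE; apply/andP; split; first exact: modz_ge0.
by have := @ltz_mod (stat_num n k i j) k.+1%:Z isT; rewrite /=; lia.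
Qed.

Lemma iprime_jprime_unique n k i j q r :
  stat_num n k i j = k.+1%:Z * q + r -> 0 <= r <= k%:Z ->
  iprime n k i j = q /\ jprime n k i j = r.
Proof.
move=> num_eq r_range.
have iprime_q : iprime n k i j = q.
  rewrite iprimeE num_eq mulrC divzMDl // divz_small ?addr0 //.
by split=> //; apply: (addrI (k.+1%:Z * q)); rewrite -num_eq -iprime_q -stat_num_euclid.
Qed.

Lemma iprime_jprimeK n k i j : 0 <= j <= k%:Z ->
  iprime n k (iprime n k i j) (jprime n k i j) = i /\
  jprime n k (iprime n k i j) (jprime n k i j) = j.
Proof.
move=> j_range; apply: iprime_jprime_unique => //.
by have := stat_num_euclid n k i j; rewrite /stat_num; lia.
Qed.

Lemma small_multiple_eq0 (x d : int) : - d < x * d < d -> x = 0.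
Proof. nia. Qed.

(* Appending an entry changes the numerator by k + j0 - j - (k+1)[j < j0],
   so the quotient moves by exactly the carry [j' < j0']. *)
Lemma iprimeS n k (i j0 j : int) : 0 <= j0 <= k%:Z -> 0 <= j <= k%:Z ->
  iprime n.+1 k (i + (j < j0)%R%:Z) j =
  iprime n k i j0 + (jprime n.+1 k (i + (j < j0)%R%:Z) j < jprime n k i j0)%R%:Z.
Proof.
move=> j0_range j_range.
have := stat_num_euclid n.+1 k (i + (j < j0)%R%:Z) j.
have := stat_num_euclid n k i j0.
have := jprime_range n.+1 k (i + (j < j0)%R%:Z) j.
have := jprime_range n k i j0.
rewrite /stat_num.
set ip := iprime _ _ _ _; set jp := jprime _ _ _ _.
set ip0 := iprime _ _ _ _; set jp0 := jprime _ _ _ _.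
move=> jp0_range jp_range num0 num.
apply/eqP; rewrite -subr_eq0; apply/eqP.
apply: (@small_multiple_eq0 _ k.+1%:Z).
by case: (ltrP j j0) num; case: ltrP => /=; lia.
Qed.

(* Keeps the new last entry n - k + j' of phi pi positive. *)
Lemma jprime_lower n k i j : 0 <= j <= k%:Z -> k%:Z + 1 - n%:Z <= j ->
  k%:Z + 1 - n%:Z <= jprime n k i j.
Proof.
move=> j_range j_lower; have := stat_num_euclid n k i j; have := jprime_range n k i j.
rewrite /stat_num leNgt => jp_range num; apply/negP => jp_small.
have : n%:Z - iprime n k i j - i = 0 by apply: (@small_multiple_eq0 _ k.+1%:Z); lia.
lia.
Qed.

Definition jstat (n k : nat) (s : seq nat) : int := (last 0%N s)%:Z - n%:Z + k%:Z.

Lemma jstat_insert_last n k p r : jstat n k (insert_last p r) = r%:Z - n%:Z + k%:Z.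
Proof. by rewrite /jstat last_insert_last. Qed.

Lemma des_insert_last_jstat n k p r : size p = n.+1 ->
  (des (insert_last p r))%:Z =
  (des p)%:Z + (jstat n.+2 k (insert_last p r) < jstat n.+1 k p)%R%:Z.
Proof.
move=> p_size; rewrite des_insert_last p_size jstat_insert_last /jstat /=.
by rewrite PoszD; congr (_ + Posz (nat_of_bool _)); apply/idP/idP; lia.
Qed.

Lemma size_std_init s : size (std_init s) = (size s).-1.
Proof. by rewrite size_map size_takel // leq_pred. Qed.

Lemma phiE k n s : size s = n.+2 ->
  phi k s = insert_last (phi k (std_init s))
              `|(n.+2%:Z - k%:Z + jprime n.+2 k (des s)%:Z (jstat n.+2 k s))%R|%N.
Proof. by move=> s_size; rewrite /phi size_std_init s_size. Qed.

Definition phi_spec k n s : Prop :=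
  let i := (des s)%:Z in let j := jstat n k s in
  [/\ inA n k (phi k s), (des (phi k s))%:Z = iprime n k i j,
      jstat n k (phi k s) = jprime n k i j & phi k (phi k s) = s].

Lemma phi_spec1 k s : inA 1 k s -> phi_spec k 1 s.
Proof.
move=> s_inA; have [s_last _] := inA_last s_inA.
have s_one : s = [:: 1%N].
  move: s_last (inA_size s_inA); case: {s_inA}s => [|x []] //= x_range _.
  by have -> : x = 1%N by lia.
have [iprime1 jprime1] : iprime 1 k 0 k = 0 /\ jprime 1 k 0 k = k.
  by apply: iprime_jprime_unique; rewrite ?lexx /stat_num //; lia.
have des1 : des [:: 1%N] = 0%N by rewrite /des big_ord0.
have phi1 : phi k [:: 1%N] = [:: 1%N] by [].
rewrite /phi_spec s_one phi1 des1 /jstat /= subrr add0r iprime1 jprime1.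
by split=> //; rewrite -s_one.
Qed.

Lemma phi_spec_insert_last k n p r :
  inA n.+1 k p -> (0 < r <= n.+2)%N -> (n.+2 <= r + k)%N ->
  phi_spec k n.+1 p -> phi_spec k n.+2 (insert_last p r).
Proof.
move=> p_inA r_range r_drop [phi_p_inA des_phi_p jstat_phi_p phi_pK].
have p_size := inA_size p_inA; have phi_p_size := inA_size phi_p_inA.
have [p_last_range p_last_drop] := inA_last p_inA.
set s := insert_last p r; set j := jstat n.+2 k s; set j0 := jstat n.+1 k p.
have s_size : size s = n.+2 by rewrite size_insert_last p_size.
have j_range : 0 <= j <= k%:Z by rewrite /j jstat_insert_last; lia.
have j0_range : 0 <= j0 <= k%:Z by rewrite /j0 /jstat; lia.
have des_s : (des s)%:Z = (des p)%:Z + (j < j0)%R%:Z := des_insert_last_jstat k r p_size.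
set ip := iprime n.+2 k (des s)%:Z j; set jp := jprime n.+2 k (des s)%:Z j.
have jp_range := jprime_range n.+2 k (des s)%:Z j.
have jp_lower : k%:Z + 1 - n.+2%:Z <= jp.
  by apply: jprime_lower => //; rewrite /j jstat_insert_last; lia.
set r' := `|(n.+2%:Z - k%:Z + jp)%R|%N.
have r'E : r'%:Z = n.+2%:Z - k%:Z + jp by rewrite /r'; lia.
have phi_s : phi k s = insert_last (phi k p) r'.
  by rewrite (phiE k s_size) std_init_insert_last.
have jstat_phi_s : jstat n.+2 k (phi k s) = jp by rewrite phi_s jstat_insert_last r'E; lia.
have des_phi_s : (des (phi k s))%:Z = ip.
  rewrite phi_s (des_insert_last_jstat k _ phi_p_size) -phi_s jstat_phi_s des_phi_p jstat_phi_p.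
  by rewrite /ip des_s iprimeS // -des_s.
split=> //.
  by rewrite phi_s; apply: inA_insert_last => //; lia.
have phi_s_size : size (phi k s) = n.+2 by rewrite phi_s size_insert_last phi_p_size.
rewrite (phiE k phi_s_size) des_phi_s jstat_phi_s {1}phi_s std_init_insert_last phi_pK.
have [_ ->] := iprime_jprimeK n.+2 (des s)%:Z j_range.
by rewrite /s /j jstat_insert_last; congr insert_last; lia.
Qed.

Lemma phi_specP k n s : inA n.+1 k s -> phi_spec k n.+1 s.
Proof.
elim: n s => [|n IH] s s_inA; first exact: phi_spec1.
have [last_range last_drop] := inA_last s_inA.
have s_uniq : uniq s by case/andP: s_inA => /permnP[].
have s_nil : s != [::] by rewrite -size_eq0 (inA_size s_inA).
rewrite -(insert_last_std_init s_uniq s_nil).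
have p_inA := inA_std_init s_inA.
exact: phi_spec_insert_last p_inA last_range last_drop (IH _ p_inA).
Qed.

Lemma GammaE k n i j s :
  Gamma k n i j s = [&& inA n k s, (des s)%:Z == i & jstat n k s == j].
Proof.
rewrite /Gamma; congr [&& _, _ & _].
by rewrite -[last _ s]/(last 0%N s) /jstat; apply/eqP/eqP; lia.
Qed.

Theorem theorem2p1 (n k i j : nat) :
  (1 <= n)%N -> (i <= n - 1)%N -> (j <= k)%N ->
  let i' := iprime n k i%:Z j%:Z in
  let j' := jprime n k i%:Z j%:Z in
  [/\ (forall s, Gamma k n i%:Z j%:Z s -> Gamma k n i' j' (phi k s)),
      {in Gamma k n i%:Z j%:Z &, injective (phi k)}
    & (forall t, Gamma k n i' j' t ->
         exists2 s, Gamma k n i%:Z j%:Z s & phi k s = t)].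
Proof.
case: n => // n _ _ j_le_k /=.
have [iK jK] := @iprime_jprimeK n.+1 k i j ltac:(lia).
split.
- move=> s; rewrite !GammaE => /and3P[/phi_specP[-> des_phi jstat_phi _] /eqP<- /eqP<-].
  by rewrite des_phi jstat_phi !eqxx.
- move=> s1 s2; rewrite -!topredE /= !GammaE => /and3P[/phi_specP[_ _ _ s1K] _ _].
  by case/and3P=> /phi_specP[_ _ _ s2K] _ _ phi_eq; rewrite -s1K phi_eq s2K.
- move=> t; rewrite !GammaE => /and3P[t_inA /eqP des_t /eqP jstat_t].
  have [phi_t_inA des_phi jstat_phi tK] := phi_specP t_inA.
  exists (phi k t) => //.
  by rewrite GammaE phi_t_inA des_phi jstat_phi des_t jstat_t iK jK !eqxx.
Qed.
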